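(* Let $A_0$ and $A_1$ be NFAs over an alphabet $\Sigma$ of cardinality $m$, each of depth at most $n$. Assume that there is no infinite tower between the languages $L(A_0)$ and $L(A_1)$. Let $(w_i)_{i=1}^r$ be a tower between $L(A_0)$ and $L(A_1)$ such that $w_i\in L(A_{i \bmod 2})$ for every $i$. Then $r \le \frac{n^{m+1}-1}{n-1}$.
   Context: All automata are assumed to have no useless states (every state lies on an accepting path). A path in an NFA is simple if its states are pairwise distinct; the depth of an NFA is the number of states on its longest simple path. For strings $v=a_1\cdots a_k$ and $w$, $v\preccurlyeq w$ ($v$ is a subsequence of $w$) if $w\in\Sigma^*a_1\Sigma^*a_2\Sigma^*\cdots\Sigma^*a_k\Sigma^*$. A sequence $(w_i)_{i=1}^r$ of strings is a tower between languages $K$ and $L$ if $w_1\in K\cup L$ and for all $i=1,\dots,r-1$: $w_i\preccurlyeq w_{i+1}$, $w_i\in K$ implies $w_{i+1}\in L$, and $w_i\in L$ implies $w_{i+1}\in K$; $r$ is its height. An infinite tower is an infinite sequence with the same properties. *)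

From mathcomp Require Import all_boot.
Set Implicit Arguments. Unset Strict Implicit. Unset Printing Implicit Defensive.

Record nfa (Sigma : finType) := NFA {
  state : finType;
  init  : {set state};
  final : {set state};
  trans : state -> Sigma -> state -> bool }.

Section NFA.
Variables (Sigma : finType) (A : nfa Sigma).

Fixpoint accept_from (q : state A) (w : seq Sigma) : bool :=
  match w with
  | [::] => q \in @final _ A
  | a :: w' => [exists q', @trans _ A q a q' && accept_from q' w']
  end.

Fixpoint reach (q : state A) (w : seq Sigma) (q' : state A) : bool :=
  match w with
  | [::] => q == q'
  | a :: w' => [exists q'', @trans _ A q a q'' && reach q'' w' q']
  end.

Definition lang (w : seq Sigma) : bool :=
  [exists q in @init _ A, accept_from q w].

Definition no_useless_states : Prop :=
  forall q : state A,
    (exists u : seq Sigma, exists2 q0, q0 \in @init _ A & reach q0 u q) /\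
    (exists v : seq Sigma, accept_from q v).

Definition edge : rel (state A) := fun p q => [exists a, @trans _ A p a q].

Definition depth_le (n : nat) : Prop :=
  forall (x : state A) (s : seq (state A)),
    path edge x s -> uniq (x :: s) -> size (x :: s) <= n.
End NFA.

Section Towers.
Variable (Sigma : finType).

Definition tower (K L : pred (seq Sigma)) (ws : seq (seq Sigma)) : Prop :=
  (forall w1, ohead ws = Some w1 -> K w1 || L w1) /\
  (forall i, i.+1 < size ws ->
     let wi := nth [::] ws i in let wi1 := nth [::] ws i.+1 in
     [/\ subseq wi wi1, K wi -> L wi1 & L wi -> K wi1]).

Definition infinite_tower (K L : pred (seq Sigma)) (f : nat -> seq Sigma) : Prop :=
  (K (f 0) || L (f 0)) /\
  (forall i, [/\ subseq (f i) (f i.+1), K (f i) -> L (f i.+1)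
              & L (f i) -> K (f i.+1)]).
End Towers.

From mathcomp Require Import all_boot zify.
From Stdlib Require Import Classical ClassicalEpsilon.
Set Implicit Arguments. Unset Strict Implicit. Unset Printing Implicit Defensive.

(* Downward-closed languages are represented by products of factors G^* and
   (a + eps), weighted by T(|G|) and 1, where T(0) = 0 and T(c+1) = n (T(c) + 1),
   so that T(m) + 1 = (n^(m+1) - 1)/(n - 1).  If an NFA of depth at most n accepts
   a word v of such an ideal I, then either v lies in an ideal of smaller weight,
   or every word of I extends inside I to an accepted word: a factor G^* is either
   realised by a strongly connected component whose cycles use all of G, or the
   run through it splits into at most n components with smaller alphabets joined
   by single letters.  If both automata realise I, I carries an infinite tower;
   otherwise one of the last two words of a tower inside I lies in a lighter
   ideal, and induction on the weight bounds the height of a tower in I by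
   weight(I) + 1.  Applied to I = Sigma^*, this is the bound. *)

Lemma subseq_catP (T : eqType) (w z1 z2 : seq T) : subseq w (z1 ++ z2) ->
  exists w1 w2, [/\ w = w1 ++ w2, subseq w1 z1 & subseq w2 z2].
Proof.
elim: z1 w => [|c z1 IH] w /=; first by exists [::], w.
case: w => [|d w] /=; first by exists [::], [::]; rewrite !sub0seq.
case: eqP => [-> | _] /IH [w1 [w2 [-> sub1 sub2]]].
  by exists (c :: w1), w2; rewrite /= eqxx.
by exists w1, w2; split=> //; apply: subseq_trans sub1 (subseq_cons _ _).
Qed.

Lemma path_connect_last (T : finType) (e : rel T) x s z :
  path e x s -> z \in x :: s -> connect e z (last x s).
Proof.
elim: s x => [|y s IH] x exs; first by rewrite mem_seq1 => /eqP ->.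
rewrite inE => /orP [/eqP -> | zs]; first exact: (path_connect exs (mem_last x (y :: s))).
by case/andP: exs => _ /IH; apply.
Qed.

(* Prepending a simple path p ~> s keeps the path simple because s' cannot
   return to the strongly connected component of p and s. *)
Lemma simple_path_prepend (T : finType) (e : rel T) p s s' sg :
  connect e p s -> connect e s p -> e s s' -> ~~ connect e s' p ->
  path e s' sg -> uniq (s' :: sg) ->
  exists2 sg', path e p sg' & uniq (p :: sg') && (size (s' :: sg) < size (p :: sg')).
Proof.
move=> /connectP [rho rho_path ->] sp ss' s'p sg_path sg_uniq.
case: (shortenP rho_path) ss' s'p sp => rho' rho'_path rho'_uniq _ ss' s'p sp.
exists (rho' ++ s' :: sg); first by rewrite cat_path rho'_path /= ss'.
rewrite -cat_cons cat_uniq rho'_uniq sg_uniq size_cat andbT.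
apply/andP; split; last by rewrite /= addSn ltnS leq_addl.
apply/hasPn => z z_sg; apply/negP => z_rho.
move/negP: s'p; apply; apply: connect_trans (path_connect sg_path z_sg) _.
exact: connect_trans (path_connect_last rho'_path z_rho) sp.
Qed.

Section Ideals.
Variable Sigma : finType.

Inductive piece := Star of {set Sigma} | Letter of Sigma.

(* [Letter b] matches exactly b; it becomes the factor (b + eps) in [in_ideal]. *)
Fixpoint matches (F : seq piece) (w : seq Sigma) : Prop :=
  match F with
  | [::] => w = [::]
  | Star G :: F' => exists u v, [/\ w = u ++ v, all (mem G) u & matches F' v]
  | Letter b :: F' => exists v, w = b :: v /\ matches F' v
  end.

Definition in_ideal F w := exists2 z, matches F z & subseq w z.

Definition full_in (P : pred (seq Sigma)) F :=
  forall x, in_ideal F x -> exists y, [/\ in_ideal F y, P y & subseq x y].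

Lemma matches_exists F : exists z, matches F z.
Proof.
elim: F => [|[G|b] F [z Fz]] /=; first by exists [::].
  by exists z, [::], z.
by exists (b :: z), z.
Qed.

Lemma in_ideal_nil F : in_ideal F [::].
Proof. by have [z Fz] := matches_exists F; exists z; rewrite ?sub0seq. Qed.

Lemma in_ideal_subseq F w w' : in_ideal F w -> subseq w' w -> in_ideal F w'.
Proof. by move=> [z Fz wz] w'w; exists z; last exact: subseq_trans w'w wz. Qed.

Lemma in_ideal0 w : in_ideal [::] w -> w = [::].
Proof. by move=> [z /= ->]; rewrite subseq0 => /eqP. Qed.

Lemma in_ideal_starP (G : {set Sigma}) F w : in_ideal (Star G :: F) w ->
  exists u v, [/\ w = u ++ v, all (mem G) u & in_ideal F v].
Proof.
move=> [_ [u [z [-> Gu Fz]]] /subseq_catP [w1 [w2 [-> sub1 sub2]]]].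
exists w1, w2; split=> //; last by exists z.
by apply/allP => a /(mem_subseq sub1) /(allP Gu).
Qed.

Lemma in_ideal_star (G : {set Sigma}) F u v :
  all (mem G) u -> in_ideal F v -> in_ideal (Star G :: F) (u ++ v).
Proof.
by move=> Gu [z Fz vz]; exists (u ++ z); [exists u, z | rewrite cat_subseq].
Qed.

Lemma in_ideal_letterP b F w : in_ideal (Letter b :: F) w ->
  (exists2 v, w = b :: v & in_ideal F v) \/ in_ideal F w.
Proof.
move=> [_ [z [-> Fz]]].
case: w => [|c w]; first by right; apply: in_ideal_nil.
rewrite /=; case: eqP => [-> | _] wz; first by left; exists w; last exists z.
by right; exists z.
Qed.

Lemma in_ideal_letter b F v : in_ideal F v -> in_ideal (Letter b :: F) (b :: v).
Proof. by move=> [z Fz vz]; exists (b :: z); [exists z | rewrite /= eqxx]. Qed.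

Lemma matches_cat F G x y : matches F x -> matches G y -> matches (F ++ G) (x ++ y).
Proof.
elim: F x => [|[H|b] F IH] x /=; first by move=> ->.
  by move=> [u [v [-> Hu Fv]]] Gy; exists u, (v ++ y); rewrite catA; split=> //; apply: IH.
by move=> [v [-> Fv]] Gy; exists (v ++ y); split=> //; apply: IH.
Qed.

Lemma in_ideal_cat F G x y : in_ideal F x -> in_ideal G y -> in_ideal (F ++ G) (x ++ y).
Proof.
move=> [z1 Fz1 xz1] [z2 Gz2 yz2]; exists (z1 ++ z2); first exact: matches_cat.
exact: cat_subseq.
Qed.

Lemma in_ideal_setT w : in_ideal [:: Star setT] w.
Proof.
by exists w => //; exists w, [::]; rewrite cats0; split=> //; apply/allP => a; rewrite inE.
Qed.

Variable n : nat.

Fixpoint star_weight c := if c is c'.+1 then n * (star_weight c').+1 else 0.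

Definition piece_weight P := if P is Star G then star_weight #|G| else 1.

Definition weight F := sumn (map piece_weight F).

Lemma leq_star_weight a b : a <= b -> star_weight a <= star_weight b.
Proof.
elim: b a => [|b IH] [|a] //= ab.
by rewrite leq_mul2l ltnS IH ?orbT.
Qed.

Lemma star_weight_geometric c : (star_weight c).+1 = \sum_(k < c.+1) n ^ k.
Proof.
elim: c => [|c IH]; first by rewrite big_ord_recl big_ord0.
rewrite big_ord_recl /= expn0 add1n IH big_distrr.
by congr _.+1; apply: eq_bigr => i _; rewrite expnS.
Qed.

Lemma weight_cat F G : weight (F ++ G) = weight F + weight G.
Proof. by rewrite /weight map_cat sumn_cat. Qed.

End Ideals.

Section Runs.
Variables (Sigma : finType) (A : nfa Sigma) (n : nat).
Hypothesis depth_A : depth_le A n.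
Implicit Types (q : state A) (x y : seq Sigma).

Lemma reach_cat q x y q' q'' : reach q x q' -> reach q' y q'' -> reach q (x ++ y) q''.
Proof.
elim: x q => [|a x IH] q /=; first by move=> /eqP ->.
by move=> /existsP [r /andP [qr /IH rq'']] /rq'' ?; apply/existsP; exists r; rewrite qr.
Qed.

Lemma accept_cat q x q' y : reach q x q' -> accept_from q' y -> accept_from q (x ++ y).
Proof.
elim: x q => [|a x IH] q /=; first by move=> /eqP ->.
by move=> /existsP [r /andP [qr /IH rq']] /rq' ?; apply/existsP; exists r; rewrite qr.
Qed.

Lemma accept_catP q x y : accept_from q (x ++ y) ->
  exists2 q', reach q x q' & accept_from q' y.
Proof.
elim: x q => [|a x IH] q /=; first by exists q.
move=> /existsP [r /andP [qr /IH [q' rq' q'y]]].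
by exists q' => //; apply/existsP; exists r; rewrite qr.
Qed.

Section Alphabet.
Variable Gam : {set Sigma}.

Definition edge_in : rel (state A) := fun p q => [exists a, (a \in Gam) && trans p a q].

Lemma edge_in_edge : subrel edge_in (@edge _ A).
Proof. by move=> p q /existsP [a /andP [_ pq]]; apply/existsP; exists a. Qed.

Lemma reach_connect q x q' : all (mem Gam) x -> reach q x q' -> connect edge_in q q'.
Proof.
elim: x q => [|a x IH] q /=; first by move=> _ /eqP ->.
move=> /andP [aG xG] /existsP [r /andP [qr /(IH _ xG)]]; apply: connect_trans.
by apply: connect1; apply/existsP; exists a; rewrite aG.
Qed.

Lemma connect_reach q q' : connect edge_in q q' ->
  exists2 x, all (mem Gam) x & reach q x q'.
Proof.
move=> /connectP [p + ->]; elim: p q => [|r p IH] q /=; first by exists [::]; rewrite /= ?eqxx.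
move=> /andP [/existsP [a /andP [aG qr]] /IH [x xG rx]].
by exists (a :: x); rewrite /= ?aG //; apply/existsP; exists r; rewrite qr.
Qed.

Definition loop_letters p : {set Sigma} :=
  [set a in Gam | [exists p1, exists p2,
     [&& connect edge_in p p1, trans p1 a p2 & connect edge_in p2 p]]].

Lemma loop_letters_sub p : loop_letters p \subset Gam.
Proof. by apply/subsetP => a; rewrite inE => /andP []. Qed.

Lemma loop_letters_subseq p y : all (mem (loop_letters p)) y ->
  exists l, [/\ all (mem Gam) l, reach p l p & subseq y l].
Proof.
elim: y => [|a y IH] /=; first by exists [::]; rewrite /= eqxx.
move=> /andP [+ /IH [l [lG pl yl]]].
rewrite inE => /andP [aG /existsP [p1 /existsP [p2 /and3P [pp1 p1p2 p2p]]]].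
have [x1 x1G r1] := connect_reach pp1; have [x2 x2G r2] := connect_reach p2p.
exists (x1 ++ a :: x2 ++ l); split.
- by rewrite all_cat /= aG all_cat x1G x2G lG.
- apply: reach_cat r1 _; apply/existsP; exists p2; rewrite p1p2 /=.
  exact: reach_cat r2 pl.
- apply: subseq_trans (suffix_subseq x1 _); rewrite /= eqxx.
  exact: subseq_trans yl (suffix_subseq x2 _).
Qed.

Local Notation Lam := loop_letters.
Local Notation deficient_between s s1 :=
  (forall p, connect edge_in s p -> connect edge_in p s1 -> #|Lam p| < #|Gam|).

Lemma full_or_deficient s s1 :
  (exists p, [/\ connect edge_in s p, connect edge_in p s1 & Gam \subset Lam p])
  \/ deficient_between s s1.
Proof.
case: (pickP [pred p | [&& connect edge_in s p, connect edge_in p s1 & Gam \subset Lam p]]).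
  by move=> p /and3P [sp ps1 GL]; left; exists p.
move=> none; right => p sp ps1; apply: proper_card.
by have := none p; rewrite /= sp ps1 properE loop_letters_sub /= => ->.
Qed.

Lemma full_in_star F s s1 p :
  connect edge_in s p -> connect edge_in p s1 -> Gam \subset Lam p ->
  full_in (accept_from s1) F -> full_in (accept_from s) (Star Gam :: F).
Proof.
move=> sp ps1 GL fullF x /in_ideal_starP [y0 [y1 [-> y0G y1F]]].
have [y1' [y1'F acc y1y1']] := fullF y1 y1F.
have y0L : all (mem (Lam p)) y0 by apply/allP => a /(allP y0G) /(subsetP GL).
have [l [lG rl y0l]] := loop_letters_subseq y0L.
have [x1 x1G r1] := connect_reach sp; have [x2 x2G r2] := connect_reach ps1.
exists ((x1 ++ l ++ x2) ++ y1'); split.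
- by apply: in_ideal_star; rewrite ?all_cat ?x1G ?lG ?x2G.
- by apply: accept_cat acc; apply: reach_cat r1 (reach_cat rl r2).
- apply: cat_subseq y1y1'; apply: subseq_trans (suffix_subseq x1 _).
  exact: subseq_trans y0l (prefix_subseq _ _).
Qed.

(* A run over Gam through deficient states only is covered by the strongly
   connected components it visits: each contributes a factor Lam(p)^* of weight
   at most T(|Gam|-1), consecutive ones are joined by one letter, and the
   components lie along a simple path. *)
Lemma run_decomposition x s p s1 :
  all (mem Gam) x -> reach s x s1 -> connect edge_in p s -> connect edge_in s p ->
  deficient_between s s1 ->
  exists2 B, in_ideal (Star (Lam p) :: B) x &
    exists2 sg, path edge_in p sg & uniq (p :: sg) &&
      (weight n B + (star_weight n #|Gam|.-1).+1
         <= size (p :: sg) * (star_weight n #|Gam|.-1).+1).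
Proof.
set t := star_weight n _.
elim: x s p => [|a x IH] s p /=.
  by move=> _ _ _ _ _; exists [::]; [apply: in_ideal_nil | exists [::]; rewrite /= ?mul1n].
move=> /andP [aG xG] /existsP [s' /andP [ss' rs's1]] ps sp deficient.
have Ess' : edge_in s s' by apply/existsP; exists a; rewrite aG.
have deficient' : deficient_between s' s1.
  by move=> p' /(connect_trans (connect1 Ess')); apply: deficient.
have [s'p | s'Np] := boolP (connect edge_in s' p).
  have [B xB sgB] := IH s' p xG rs's1 (connect_trans ps (connect1 Ess')) s'p deficient'.
  exists B => //; have [u [v [-> uL vB]]] := in_ideal_starP xB.
  have aL : a \in Lam p.
    by rewrite inE aG; apply/existsP; exists s; apply/existsP; exists s'; rewrite ps ss'.
  by rewrite -cat_cons; apply: in_ideal_star; rewrite //= aL.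
have [B xB [sg sg_path /andP [sg_uniq wB]]] :=
  IH s' s' xG rs's1 (connect0 _ _) (connect0 _ _) deficient'.
have [sg' sg'_path /andP [sg'_uniq sg_sg']] :=
  simple_path_prepend ps sp Ess' s'Np sg_path sg_uniq.
exists (Letter a :: Star (Lam s') :: B).
  by rewrite -[a :: x]cat0s; apply: in_ideal_star => //; apply: in_ideal_letter.
exists sg' => //; apply/andP; split=> //.
have Ls' : star_weight n #|Lam s'| <= t.
  apply: leq_star_weight; rewrite -ltnS; apply: leq_trans (leqSpred _).
  exact: deficient (connect1 Ess') (reach_connect xG rs's1).
apply: leq_trans (leq_mul (sg_sg' : (size (s' :: sg)).+1 <= _) (leqnn t.+1)).
rewrite mulSn [_ + t.+1]addnC leq_add2l; apply: leq_trans wB.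
change (1 + (star_weight n #|Lam s'| + weight n B) <= weight n B + t.+1).
by rewrite add1n addnC addnS ltnS leq_add2l.
Qed.

Lemma star_refinement u s s1 :
  all (mem Gam) u -> reach s u s1 -> deficient_between s s1 ->
  exists2 D, in_ideal D u & weight n D < star_weight n #|Gam|.
Proof.
move=> uG rus1 deficient.
have [B uB [sg sg_path /andP [sg_uniq wB]]] :=
  run_decomposition uG rus1 (connect0 _ _) (connect0 _ _) deficient.
have sg_n : size (s :: sg) <= n.
  by apply: depth_A sg_uniq; apply: sub_path sg_path; apply: edge_in_edge.
have Ls := deficient s (connect0 _ _) (reach_connect uG rus1).
exists (Star (Lam s) :: B) => //.
move: wB Ls; case: #|Gam| => [|c] //= wB Ls.
have Ls' : star_weight n #|Lam s| <= star_weight n c by apply: leq_star_weight.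
apply: leq_trans (leq_mul sg_n (leqnn _)); rewrite /weight /= in wB *; lia.
Qed.
End Alphabet.

Lemma full_in_letter b F (s s' : state A) :
  trans s b s' -> full_in (accept_from s') F -> full_in (accept_from s) (Letter b :: F).
Proof.
move=> ss' fullF x /in_ideal_letterP xF.
have [x1 xx1 x1F] : exists2 x1, subseq x (b :: x1) & in_ideal F x1.
  case: xF => [[x1 -> x1F] | xF]; first by exists x1; rewrite /= ?eqxx.
  by exists x; rewrite ?subseq_cons.
have [y [yF acc x1y]] := fullF x1 x1F.
exists (b :: y); split; first exact: in_ideal_letter.
  by apply/existsP; exists s'; rewrite ss'.
by apply: subseq_trans xx1 _; rewrite /= eqxx.
Qed.

Lemma refine_ideal F (s : state A) v : accept_from s v -> in_ideal F v ->
  (exists2 G, in_ideal G v & weight n G < weight n F) \/ full_in (accept_from s) F.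
Proof.
elim: F s v => [|[Gam|b] F IH] s v acc vF.
- right => x /in_ideal0 ->; exists [::].
  by split; [apply: in_ideal_nil | rewrite -(in_ideal0 vF) |].
- have [u [v' [Ev uG v'F]]] := in_ideal_starP vF; subst v.
  have [s1 rus1 acc'] := accept_catP acc.
  have [[p [sp ps1 GL]] | deficient] := full_or_deficient Gam s s1.
    case: (IH s1 v' acc' v'F) => [[G' v'G' wG'] | fullF]; last first.
      by right; apply: full_in_star sp ps1 GL fullF.
    by left; exists (Star Gam :: G'); [apply: in_ideal_star | rewrite /weight /= ltn_add2l].
  have [D uD wD] := star_refinement uG rus1 deficient.
  have [G' v'G' wG'] : exists2 G', in_ideal G' v' & weight n G' <= weight n F.
    by case: (IH s1 v' acc' v'F) => [[G' ? /ltnW] | _]; [exists G' | exists F].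
  left; exists (D ++ G'); first exact: in_ideal_cat.
  by rewrite weight_cat -addSn; apply: leq_add.
- case: (in_ideal_letterP vF) => [[v' Ev v'F] | vF']; last by left; exists F.
  move: acc; rewrite Ev => /existsP [s' /andP [ss' acc']].
  case: (IH s' v' acc' v'F) => [[G' v'G' wG'] | fullF]; last first.
    by right; apply: full_in_letter ss' fullF.
  by left; exists (Letter b :: G'); [apply: in_ideal_letter | rewrite /weight /= ltn_add2l].
Qed.

Lemma refine_ideal_lang F v : lang A v -> in_ideal F v ->
  (exists2 G, in_ideal G v & weight n G < weight n F) \/ full_in (lang A) F.
Proof.
move=> /existsP [q /andP [q_init acc]] /(refine_ideal acc) [|fullF]; first by left.
right => x /fullF [y [yF qy xy]]; exists y; split=> //.
by apply/existsP; exists q; rewrite q_init.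
Qed.

End Runs.

Section Towers.
Variables (Sigma : finType) (A0 A1 : nfa Sigma).

Definition nfa_of (b : bool) := if b then A1 else A0.

Lemma full_in_infinite_tower F : full_in (lang A0) F -> full_in (lang A1) F ->
  exists f, infinite_tower (lang A0) (lang A1) f.
Proof.
move=> full0 full1.
have [[w /andP [w0 w1]] | disjoint] := classic (exists w, lang A0 w && lang A1 w).
  by exists (fun=> w); split=> [|i]; rewrite ?w0 ?subseq_refl.
have full b : full_in (lang (nfa_of b)) F by case: b.
pose step b x := epsilon (inhabits [::])
  (fun y => [/\ in_ideal F y, lang (nfa_of b) y & subseq x y]).
have stepP b x : in_ideal F x ->
    [/\ in_ideal F (step b x), lang (nfa_of b) (step b x) & subseq x (step b x)].
  by move=> /(full b) ex_y; apply: epsilon_spec ex_y.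
pose fix f i := if i is i'.+1 then step (odd i) (f i') else step false [::].
have fP i : in_ideal F (f i) /\ lang (nfa_of (odd i)) (f i).
  elim: i => [|i [fiF _]]; first by case: (stepP false [::] (in_ideal_nil F)).
  by case: (stepP (odd i.+1) (f i) fiF).
have other_lang i : ~~ lang (nfa_of (~~ odd i)) (f i).
  apply/negP => other; apply: disjoint; exists (f i).
  by move: (proj2 (fP i)) other; case: (odd i) => /= -> ->.
exists f; split; first by case: (fP 0) => _ ->.
move=> i; split=> [|fi|fi]; first by case: (stepP (odd i.+1) (f i) (proj1 (fP i))).
  by move: (other_lang i) (proj2 (fP i.+1)) => /=; case: (odd i); rewrite /= ?fi.
by move: (other_lang i) (proj2 (fP i.+1)) => /=; case: (odd i); rewrite /= ?fi.
Qed.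

Definition alternating (ws : seq (seq Sigma)) :=
  (forall i, i.+1 < size ws -> subseq (nth [::] ws i) (nth [::] ws i.+1)) /\
  (forall i, i < size ws -> lang (nfa_of (odd i.+1)) (nth [::] ws i)).

Lemma alternating_take t ws : alternating ws -> alternating (take t ws).
Proof.
move=> [ws_sub ws_lang]; split=> i; rewrite size_take_min leq_min => /andP [it iws].
  by rewrite !nth_take // ?ws_sub // ltnW.
by rewrite nth_take // ws_lang.
Qed.

Lemma alternating_subseq ws i j : alternating ws -> i <= j < size ws ->
  subseq (nth [::] ws i) (nth [::] ws j).
Proof.
move=> [ws_sub _] /andP []; elim: j => [|j IH]; first by rewrite leqn0 => /eqP ->.
rewrite leq_eqVlt => /predU1P [-> _ | ij jws]; first exact: subseq_refl.
exact: subseq_trans (IH ij (ltnW jws)) (ws_sub j jws).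
Qed.

Variable n : nat.
Hypotheses (depth_A0 : depth_le A0 n) (depth_A1 : depth_le A1 n).
Hypothesis no_infinite_tower : ~ exists f, infinite_tower (lang A0) (lang A1) f.

(* The last two words of a longer tower cannot both leave the ideal realised,
   so one of them lies in a lighter ideal, and induction applies to the prefix. *)
Lemma alternating_size_le F ws : alternating ws ->
  (forall i, i < size ws -> in_ideal F (nth [::] ws i)) -> size ws <= (weight n F).+1.
Proof.
have [N] := ubnP (weight n F); elim: N F ws => // N IH F ws /ltnSE wF alt wsF.
have depth_of b : depth_le (nfa_of b) n by case: b.
have lighter_or_full t : t < size ws ->
    t.+1 <= weight n F \/ full_in (lang (nfa_of (odd t.+1))) F.
  move=> tws; have [[G tG wG] | ] := refine_ideal_lang (depth_of _) (alt.2 t tws) (wsF t tws);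
    last by right.
  have prefixG i : i < size (take t.+1 ws) -> in_ideal G (nth [::] (take t.+1 ws) i).
    rewrite size_takel // => it; rewrite nth_take //.
    by apply: in_ideal_subseq tG (alternating_subseq alt _); rewrite -ltnS it.
  have := IH G _ (leq_trans wG wF) (@alternating_take t.+1 ws alt) prefixG.
  by rewrite size_takel // => t_le; left; apply: leq_trans t_le wG.
have [ws_le1 | ws_gt1] := leqP (size ws) 1; first exact: leq_trans ws_le1 _.
have [r Ews] : exists r, size ws = r.+2 by exists (size ws).-2; lia.
have r_lt : r.+1 < size ws by rewrite Ews.
have [|full_r] := lighter_or_full r (ltnW r_lt); first by rewrite Ews.
have [|full_r1] := lighter_or_full r.+1 r_lt; first by rewrite Ews => /ltnW.
case: no_infinite_tower; move: full_r full_r1 => /=.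
case: (odd r) => /= full_r full_r1.
  exact: full_in_infinite_tower full_r full_r1.
exact: full_in_infinite_tower full_r1 full_r.
Qed.

End Towers.

Theorem theorem7 (Sigma : finType) (m n : nat) (A0 A1 : nfa Sigma) :
  #|Sigma| = m ->
  no_useless_states A0 -> no_useless_states A1 ->
  depth_le A0 n -> depth_le A1 n ->
  ~ (exists f : nat -> seq Sigma,
       infinite_tower (lang A0) (lang A1) f) ->
  forall ws : seq (seq Sigma),
    tower (lang A0) (lang A1) ws ->
    (forall i, 0 < i <= size ws ->
       nth [::] ws i.-1 \in (if odd i then lang A1 else lang A0)) ->
    size ws <= \sum_(k < m.+1) n ^ k.
Proof.
(* Useless states do no harm: the depth bound constrains every simple path. *)
move=> card_Sigma _ _ depth_A0 depth_A1 no_tower ws [_ ws_tower] ws_lang.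
have alt : alternating A0 A1 ws.
  split=> [i /ws_tower [] // | i i_lt].
  by have := ws_lang i.+1; rewrite i_lt; case: (odd i.+1) => /(_ isT).
have := alternating_size_le depth_A0 depth_A1 no_tower alt (fun i _ => in_ideal_setT _).
by rewrite /weight /= addn0 cardsT card_Sigma star_weight_geometric.
Qed.
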